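(* Let $G=\langle A\cup B\rangle$ be a CS group with $|X|\ge2$ whose rooted group $A$ is perfect and contains an element $a$ acting transitively on $X$. Then $G$ is not orbitwise-abelian, and for every generating set $S$ of $B$ the dynamical system $\Sigma_S$ is not eventually trivial; more precisely $A\subseteq\sigma_S(a,0)$, so $a\in\Sigma_S^k(\{a\})$ for all $k\ge1$.
   Context: Let $X$ be a nonempty set with distinguished letter $0$, $\dot X=X\setminus\{0\}$; $X^*$ is the free monoid on $X$ viewed as a rooted tree; $\mathrm{Aut}(X^* )$ acts on the right; sections are defined by $(u\star v).g=u.g\star v.(g|_u)$; elements of $\mathrm{Sym}(X)$ are rooted automorphisms; $\mathrm{St}(1)$ is the first layer stabiliser. A CS group is $G=\langle A\cup B\rangle$ with $A\le\mathrm{Sym}(X)$ transitive and $B\le\mathrm{St}(1)$ such that $b|_0=b$ for $b\in B$ and the $b|_x$ ($b\in B$, $x\in\dot X$) lie in $A$ and generate $A$. $\mathrm{st}_A(0)$ is the stabiliser of $0$; $\mathrm{orb}_c(0)$ the $\langle c\rangle$-orbit of $0$, $\ell_c(0)$ its length. $G$ is orbitwise-abelian if for every $a\in A$ the group $\langle b|_{0.c}:c\in\langle a\rangle\setminus\mathrm{st}_A(0),b\in B\rangle$ is abelian. $\mathrm{mp}_A(0,x)=\{c\in A:0.c=x\}$; $\mathfrak C(a,x)=\{cac^{-1}:c\in\mathrm{mp}_A(0,x)\}$; $\mathfrak X(a,x)=\bigcup_{c\in\mathfrak C(a,x)}\mathrm{orb}_c(0)\setminus\{0\}$. For $S\subseteq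 B$: $H_S(a,x)=\langle b|_y:y\in\mathfrak X(a,x),b\in S\rangle$, $\sigma_S(a,x)=\langle b|_{0.c}b|_{0.c^2}\cdots b|_{0.c^{\ell_c(0)-1}}:c\in\mathfrak C(a,x),b\in S\rangle\cdot H_S(a,x)'$ (derived subgroup), $\Sigma_S(P)=\bigcup_{a\in P}\bigcup_{x\in X}\sigma_S(a,x)$; eventually trivial: for every $a$ there is $n$ with $\Sigma_S^m(\{a\})\subseteq\{1_A\}$ for all $m>n$. *)

From HB Require Import structures.
From mathcomp Require Import all_boot all_fingroup.
From mathcomp Require Import boolp.

Set Implicit Arguments.
Unset Strict Implicit.
Unset Printing Implicit Defensive.
Local Open Scope group_scope.

Section CS.
Variables (X : finType) (x0 : X).

(* Elements of the free monoid X^*: words.  Tree maps are functions on words;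
   Aut(X^* ) acts on the right: u.g = g u, and the product g*h acts by
   u.(g*h) = (u.g).h, i.e. as the function  h \o g. *)
Definition wmap := seq X -> seq X.

Definition is_treeaut (g : wmap) : Prop :=
  [/\ (forall w, size (g w) = size w),
      (forall u v, take (size u) (g (u ++ v)) = g u)
    & bijective g].

(* section g|_u : (u v).g = u.g (v.(g|_u)) *)
Definition section (g : wmap) (u : seq X) : wmap :=
  fun v => drop (size u) (g (u ++ v)).

Definition in_St1 (g : wmap) : Prop := forall x : X, g [:: x] = [:: x].

(* the rooted automorphism given by a permutation p of X (mathcomp perms
   compose left-to-right: (p * q) x = q (p x), matching the right action) *)
Definition rooted (p : {perm X}) : wmap :=
  fun w => if w is x :: w' then p x :: w' else [::].

Definition is_sec (g : wmap) (y : X) (p : {perm X}) : Prop :=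
  forall v, section g [:: y] v = rooted p v.

(* the section g|_y viewed as an element of Sym(X) (only used when it is
   rooted, which is the case for b in B and y <> x0 in a CS group) *)
Definition secperm (g : wmap) (y : X) : {perm X} :=
  odflt 1%g [pick p : {perm X} | `[< is_sec g y p >] ].

Definition is_subgroup_aut (B : wmap -> Prop) : Prop :=
  [/\ forall b, B b -> is_treeaut b,
      B (fun w => w),
      (forall f g, B f -> B g -> B (g \o f))
    & (forall f, B f -> exists2 h, B h &
          (forall w, h (f w) = w) /\ (forall w, f (h w) = w))].

Inductive gen (S : wmap -> Prop) : wmap -> Prop :=
| gen_id : gen S (fun w => w)
| gen_S s : S s -> gen S s
| gen_mul f g : gen S f -> gen S g -> gen S (g \o f)
| gen_inv g f : gen S g -> (forall w, f (g w) = w) -> (forall w, g (f w) = w) ->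
                gen S f.

Definition generates (S B : wmap -> Prop) : Prop :=
  (forall s, S s -> B s) /\ (forall f, B f -> gen S f).

Definition CS_group (A : {group {perm X}}) (B : wmap -> Prop) : Prop :=
  [/\ [transitive A, on [set: X] | 'P] /\
      is_subgroup_aut B,
      (forall b, B b -> in_St1 b),
      (forall b, B b -> forall v, section b [:: x0] v = b v),
      (forall b x, B b -> x != x0 -> exists2 p, p \in A & is_sec b x p)
    & A :=: <<[set p : {perm X} |
                `[< exists b x, [/\ B b, x != x0 & is_sec b x p] >] ]>>].

Definition orbitwise_abelian (A : {group {perm X}}) (B : wmap -> Prop) : Prop :=
  forall a, a \in A ->
    abelian <<[set p : {perm X} | `[< exists b c, [/\ B b, c \in <[a]>,
                 c x0 != x0 & p = secperm b (c x0)] >] ]>>.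

Definition mpA (A : {group {perm X}}) (x : X) : {set {perm X}} :=
  [set c in A | c x0 == x].

Definition Cset (A : {group {perm X}}) (a : {perm X}) (x : X) : {set {perm X}} :=
  [set (c * a * c^-1)%g | c in mpA A x].

Definition orb0 (c : {perm X}) : {set X} := porbit c x0.

Definition Xset (A : {group {perm X}}) (a : {perm X}) (x : X) : {set X} :=
  \bigcup_(c in Cset A a x) (orb0 c :\ x0).

Definition HS (A : {group {perm X}}) (S : wmap -> Prop) (a : {perm X}) (x : X)
  : {set {perm X}} :=
  <<[set p : {perm X} | `[< exists b y, [/\ S b, y \in Xset A a x &
                                           p = secperm b y] >] ]>>.

Definition secprod (b : wmap) (c : {perm X}) : {perm X} :=
  (\prod_(1 <= i < #|orb0 c|) secperm b ((c ^+ i)%g x0))%g.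

Definition sigmaS (A : {group {perm X}}) (S : wmap -> Prop) (a : {perm X}) (x : X)
  : {set {perm X}} :=
  (<<[set p : {perm X} | `[< exists b c, [/\ S b, c \in Cset A a x &
                                            p = secprod b c] >] ]>>
   * [~: HS A S a x, HS A S a x])%g.

Definition SigmaS (A : {group {perm X}}) (S : wmap -> Prop) (P : {set {perm X}})
  : {set {perm X}} :=
  \bigcup_(a in P) \bigcup_(x : X) sigmaS A S a x.

Definition eventually_trivial (A : {group {perm X}}) (S : wmap -> Prop) : Prop :=
  forall a, a \in A -> exists n, forall m, n < m ->
    iter m (SigmaS A S) [set a] \subset [set 1%g].

End CS.

(* Sections of elements of B at letters other than x0 are rooted, and taking
   the section at a fixed letter is multiplicative; hence the sections of a
   generating set S already generate A.  When a cycles through all of X, the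
   set X(a, 0) is all of X minus x0, so H_S(a, 0) contains A, and a perfect A
   lies in the derived subgroup of H_S(a, 0), hence in sigma_S(a, 0).  In
   particular a is a fixed point of the dynamics, and a <> 1 since |X| >= 2.
   Likewise the group in the definition of orbitwise-abelian contains A, so
   it is not abelian: a perfect abelian group is trivial. *)
From HB Require Import structures.
From mathcomp Require Import all_boot all_fingroup.
From mathcomp Require Import boolp.

Set Implicit Arguments.
Unset Strict Implicit.
Unset Printing Implicit Defensive.
Local Open Scope group_scope.

Lemma perfect_abelian_trivial (gT : finGroupType) (G : {group gT}) :
  [~: G, G] = G -> abelian G -> G = 1 :> {set gT}.
Proof. by move=> perfG /commG1P G1; rewrite -perfG. Qed.

Section TransitiveCycle.
Variables (X : finType) (x0 : X) (a : {perm X}).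
Hypothesis a_trans : [transitive <[a]>, on [set: X] | 'P].

Lemma transitive_cycle_reach y : exists2 c, c \in <[a]> & c x0 = y.
Proof. by have [c ca ->] := atransP2 a_trans (in_setT x0) (in_setT y); exists c. Qed.

Lemma transitive_cycle_orb0 : orb0 x0 a = [set: X].
Proof. by rewrite /orb0 porbitE (atransP a_trans) ?inE. Qed.

Lemma transitive_cycle_neq1 : 1 < #|X| -> a != 1.
Proof.
rewrite (cardD1 x0) ltnS lt0n => /existsP [y /andP [y_neq _]].
apply: contraNneq y_neq => a1.
have [c] := transitive_cycle_reach y.
by rewrite a1 cycle1 inE => /eqP -> <-; rewrite perm1.
Qed.

End TransitiveCycle.

Section CSSections.
Variables (X : finType) (x0 : X) (A : {group {perm X}}) (B : wmap X -> Prop).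
Hypothesis CS_AB : CS_group x0 A B.

Lemma is_sec_apply f y p :
  B f -> is_sec f y p -> forall z, f [:: y; z] = [:: y; p z].
Proof.
case: CS_AB => [[_ [B_aut _ _ _]] B_St1 _ _ _] Bf f_sec z.
have [_ f_prefix _] := B_aut f Bf.
have f_tail := f_sec [:: z]; rewrite /section /= in f_tail.
have f_head := f_prefix [:: y] [:: z]; rewrite (B_St1 f Bf y) /= in f_head.
by rewrite -(cat_take_drop 1 (f [:: y; z])) f_tail f_head.
Qed.

Lemma secperm_is_sec f y p : B f -> is_sec f y p -> secperm f y = p.
Proof.
move=> Bf f_sec; rewrite /secperm; case: pickP => [q /asboolP q_sec|].
  apply/permP => z.
  by have := is_sec_apply Bf q_sec z; rewrite (is_sec_apply Bf f_sec z) => -[].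
by move=> /(_ p); rewrite (asboolT f_sec).
Qed.

Lemma secpermE f y : B f -> y != x0 ->
  secperm f y \in A /\ forall z, f [:: y; z] = [:: y; secperm f y z].
Proof.
case: CS_AB => _ _ _ B_rooted _ Bf y_neq.
have [p pA f_sec] := B_rooted f y Bf y_neq.
by rewrite (secperm_is_sec Bf f_sec); split => // z; apply: is_sec_apply.
Qed.

Lemma secperm_eqP f y (p : {perm X}) : B f -> y != x0 ->
  (forall z, f [:: y; z] = [:: y; p z]) -> secperm f y = p.
Proof.
move=> Bf y_neq f_yz; have [_ f_sec] := secpermE Bf y_neq.
by apply/permP => z; have := f_sec z; rewrite f_yz => -[].
Qed.

Lemma secperm_id y : y != x0 -> secperm (fun w => w) y = 1.
Proof.
have [[_ [_ B_id _ _]] _ _ _ _] := CS_AB.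
by move=> y_neq; apply: secperm_eqP => // z; rewrite perm1.
Qed.

Lemma secpermM f g y : B f -> B g -> B (g \o f) -> y != x0 ->
  secperm (g \o f) y = secperm f y * secperm g y.
Proof.
move=> Bf Bg Bgf y_neq; apply: secperm_eqP => // z.
have [_ f_sec] := secpermE Bf y_neq; have [_ g_sec] := secpermE Bg y_neq.
by rewrite /= f_sec g_sec permM.
Qed.

Lemma secpermV f g y : B f -> B g -> y != x0 -> cancel g f ->
  secperm f y = (secperm g y)^-1.
Proof.
move=> Bf Bg y_neq gK; apply: secperm_eqP => // z.
have [_ g_sec] := secpermE Bg y_neq.
by have := gK [:: y; (secperm g y)^-1 z]; rewrite g_sec permKV.
Qed.

Lemma gen_sub_B S : generates S B -> forall f, gen S f -> B f.
Proof.
case: CS_AB => [[_ [_ B_id B_mul B_inv]] _ _ _ _] [S_B _] f.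
elim=> [|s /S_B //|f1 g _ ? _ ?|g f0 _ Bg gK fK]; [exact: B_id | exact: B_mul |].
have [h Bh [_ hK]] := B_inv g Bg.
by have -> : f0 = h by apply: funext => w; rewrite -{1}(hK w) gK.
Qed.

Lemma generates_secperm S (H : {group {perm X}}) : generates S B ->
  (forall s y, S s -> y != x0 -> secperm s y \in H) ->
  forall f y, B f -> y != x0 -> secperm f y \in H.
Proof.
move=> genS S_H f y /(proj2 genS) genf; have gen_B := gen_sub_B genS.
elim: genf y => [|s Ss|f1 g gf1 IHf gg IHg|g f1 gg IHg gK fK] y y_neq.
- by rewrite secperm_id.
- exact: S_H.
- have Bgf1 : B (g \o f1) by apply/gen_B/gen_mul.
  by rewrite (secpermM (gen_B _ gf1) (gen_B _ gg)) ?groupM ?IHf ?IHg.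
- by rewrite (secpermV (gen_B _ (gen_inv gg gK fK)) (gen_B _ gg)) ?groupV ?IHg.
Qed.

Lemma CS_rooted_sub (H : {group {perm X}}) :
  (forall b y, B b -> y != x0 -> secperm b y \in H) -> A \subset H.
Proof.
have [_ _ _ _ ->] := CS_AB; move=> B_H; rewrite gen_subG.
apply/subsetP => p; rewrite inE => /asboolP [b [y [Bb y_neq b_sec]]].
by rewrite -(secperm_is_sec Bb b_sec) B_H.
Qed.

End CSSections.

Section Dynamics.
Variables (X : finType) (x0 : X) (A : {group {perm X}}) (S : wmap X -> Prop).

Lemma mem_Cset_self a : a \in Cset x0 A a x0.
Proof.
apply/imsetP; exists 1; first by rewrite inE group1 perm1 eqxx.
by rewrite mul1g invg1 mulg1.
Qed.

Lemma transitive_Xset a y : [transitive <[a]>, on [set: X] | 'P] ->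
  y != x0 -> y \in Xset x0 A a x0.
Proof.
move=> a_trans y_neq; apply/bigcupP; exists a; first exact: mem_Cset_self.
by rewrite transitive_cycle_orb0 // !inE y_neq.
Qed.

Lemma HS_commutator_sub_sigmaS a x :
  [~: HS x0 A S a x, HS x0 A S a x] \subset sigmaS x0 A S a x.
Proof. exact: mulG_subr. Qed.

Lemma mem_iter_SigmaS a : a \in sigmaS x0 A S a x0 ->
  forall k, a \in iter k (SigmaS x0 A S) [set a].
Proof.
move=> a_sigma; elim=> [|k IHk] /=; first by rewrite inE.
by apply/bigcupP; exists a => //; apply/bigcupP; exists x0.
Qed.

Lemma fixed_point_not_eventually_trivial a : a \in A -> a != 1 ->
  (forall k, a \in iter k (SigmaS x0 A S) [set a]) ->
  ~ eventually_trivial x0 A S.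
Proof.
move=> aA a_neq1 a_iter /(_ a aA) [n /(_ n.+1 (ltnSn n)) /subsetP sub1].
by move: (sub1 a (a_iter _)); rewrite inE; apply/negP.
Qed.

End Dynamics.

Theorem mainTheorem17 (X : finType) (x0 : X)
  (A : {group {perm X}}) (B : wmap X -> Prop) (a : {perm X}) :
  CS_group x0 A B ->
  1 < #|X| ->
  ([~: A, A] = A)%g ->
  a \in A ->
  [transitive <[a]>, on [set: X] | 'P] ->
  ~ orbitwise_abelian x0 A B /\
  (forall S : wmap X -> Prop, generates S B ->
     [/\ ~ eventually_trivial x0 A S,
         A \subset sigmaS x0 A S a x0
       & forall k, 0 < k -> a \in iter k (SigmaS x0 A S) [set a]]).
Proof.
move=> CS_AB X_gt1 A_perfect aA a_trans.
have a_neq1 := transitive_cycle_neq1 x0 a_trans X_gt1.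
split.
  move=> /(_ a aA) K_abelian; apply/negP: a_neq1; rewrite negbK.
  have A1 : A = 1 :> {set _}.
    apply: perfect_abelian_trivial A_perfect (abelianS _ K_abelian).
    apply: (CS_rooted_sub CS_AB (H := (<<_>>)%G)) => b y Bb y_neq.
    apply: mem_gen; rewrite inE.
    have [c ca cx0] := transitive_cycle_reach x0 a_trans y.
    by apply/asboolP; exists b, c; rewrite cx0.
  by move: aA; rewrite A1 inE.
move=> S genS.
have A_HS : A \subset HS x0 A S a x0.
  apply: (CS_rooted_sub CS_AB (H := (<<_>>)%G)) => b y Bb y_neq.
  apply: (generates_secperm CS_AB genS (H := (<<_>>)%G)) Bb y_neq => s z Ss z_neq.
  apply: mem_gen; rewrite inE; apply/asboolP; exists s, z.
  by split => //; apply: transitive_Xset.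
have A_sigma : A \subset sigmaS x0 A S a x0.
  by rewrite -{1}A_perfect (subset_trans (commgSS A_HS A_HS)) ?HS_commutator_sub_sigmaS.
have a_iter := mem_iter_SigmaS (subsetP A_sigma a aA).
split=> [||k _] //; exact: fixed_point_not_eventually_trivial aA a_neq1 a_iter.
Qed.
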